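(* Let $\mathcal C\subseteq(S^2)^n$ be any nonempty finite set and let $x,y$ be drawn independently and uniformly at random from $\mathcal C$. Then for every $S\subseteq[n]$, \[ \Pr\bigl[x_s\not\perp y_s\text{ for all } s\in S\bigr]\ \ge\ 3^{-|S|}. \]
   Context: $S^2$ is the unit sphere in $\mathbb R^3$; $x_s$ denotes the $s$-th coordinate (a unit vector in $\mathbb R^3$) of $x\in(S^2)^n$, and $u\not\perp v$ means $\langle u,v\rangle\ne0$. *)

From mathcomp Require Import all_boot all_order all_algebra.
From mathcomp Require Import reals.
Set Implicit Arguments. Unset Strict Implicit. Unset Printing Implicit Defensive.
Import Order.TTheory GRing.Theory Num.Theory.
Local Open Scope ring_scope.

Definition dot3 (R : realType) (u v : 'rV[R]_3) : R := \sum_(i < 3) u 0 i * v 0 i.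

Definition on_spheres (R : realType) (n : nat) (x : {ffun 'I_n -> 'rV[R]_3}) : Prop :=
  forall s : 'I_n, dot3 (x s) (x s) = 1.

(* Pr_{x,y uniform independent on C}[ x_s not_perp y_s for all s in S ],
   C given as a duplicate-free list. *)
Definition prob_nonperp (R : realType) (n : nat)
  (C : seq {ffun 'I_n -> 'rV[R]_3}) (S : {set 'I_n}) : R :=
  (\sum_(x <- C) \sum_(y <- C)
     (if [forall s in S, dot3 (x s) (y s) != 0] then 1 else 0))
  / ((size C) ^ 2)%:R.

(** The events are compared through a positive semidefinite surrogate: for unit
    vectors, [<x_s, y_s>^2] is at most 1 and vanishes when [x_s] and [y_s] are
    orthogonal, so the probability is at least the average over [x, y] of
    [prod_(s in S) <x_s, y_s>^2].  Since [<u, v>^2 = <u (x) u, v (x) v>], this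
    average is the squared norm of the mean [A] of the tensors
    [(x) (x_s (x) x_s)].  Pairing with [Psi := (x) Id_3] gives [<A, Psi> = 1]
    because every [x_s] is a unit vector, while [|Psi|^2 = 3^|S|]; the
    Cauchy-Schwarz inequality then yields [|A|^2 >= 3^-|S|]. *)

From mathcomp Require Import all_boot all_order all_algebra.
From mathcomp Require Import reals.
From mathcomp Require Import ring.
Import Order.TTheory GRing.Theory Num.Theory.
Local Open Scope ring_scope.
Set Implicit Arguments. Unset Strict Implicit.

Lemma sum_mul_sqr_le (R : realFieldType) (I : finType) (a b : I -> R) :
  (\sum_i a i * b i) ^+ 2 <= (\sum_i a i ^+ 2) * (\sum_i b i ^+ 2).
Proof.
set A := \sum_i a i ^+ 2; set B := \sum_i b i ^+ 2; set P := \sum_i a i * b i.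
have B_ge0 : 0 <= B by apply: sumr_ge0 => i _; exact: sqr_ge0.
have [B0 | B_gt0] := eqVneq B 0.
  have b0 i : b i = 0.
    by apply/eqP; rewrite -sqrf_eq0; apply/eqP/(psumr_eq0P _ B0) => // j _; exact: sqr_ge0.
  by rewrite B0 /P big1 ?expr0n ?mulr0 // => i _; rewrite b0 mulr0.
have expand : \sum_i (B * a i - P * b i) ^+ 2 = B * (B * A - P ^+ 2).
  rewrite (eq_bigr (fun i => B * B * a i ^+ 2 - 2 * B * P * (a i * b i)
                           + P ^+ 2 * b i ^+ 2)); last by move=> i _; ring.
  by rewrite big_split sumrB /= -!mulr_sumr -/A -/B -/P; ring.
have : 0 <= B * (B * A - P ^+ 2).
  by rewrite -expand; apply: sumr_ge0 => i _; exact: sqr_ge0.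
by rewrite pmulr_rge0 ?lt0r ?B_gt0 // subr_ge0 mulrC.
Qed.

Lemma prod_sum_mul_ffun (R : comPzRingType) (I J : finType) (u v : I -> J -> R) :
  \prod_i \sum_j u i j * v i j
  = \sum_(f : {ffun I -> J}) (\prod_i u i (f i)) * \prod_i v i (f i).
Proof. by rewrite bigA_distr_bigA; apply: eq_bigr => f _; rewrite big_split. Qed.

Section PairVectors.
Variable R : realType.
Local Notation pair3 := ('I_3 * 'I_3)%type.

Definition pdot (u v : pair3 -> R) : R := \sum_p u p * v p.
Definition outer (u : 'rV[R]_3) (p : pair3) : R := u 0 p.1 * u 0 p.2.
Definition id3 (p : pair3) : R := (p.1 == p.2)%:R.
Definition e00 (p : pair3) : R := (p == (ord0, ord0))%:R.

Lemma pdotE (u v : pair3 -> R) : pdot u v = \sum_i \sum_j u (i, j) * v (i, j).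
Proof. by rewrite /pdot pair_bigA; apply: eq_bigr => -[i j]. Qed.

Lemma pdot_outer (u v : 'rV[R]_3) : pdot (outer u) (outer v) = dot3 u v ^+ 2.
Proof.
rewrite pdotE /outer /dot3 expr2 mulr_suml.
apply: eq_bigr => i _; rewrite mulr_sumr; apply: eq_bigr => j _; ring.
Qed.

Lemma pdot_outer_id3 (u : 'rV[R]_3) : pdot (outer u) id3 = dot3 u u.
Proof.
rewrite pdotE /outer /id3 /dot3; apply: eq_bigr => i _.
rewrite (bigD1 i) //= eqxx mulr1 big1 ?addr0 // => j /negbTE ji.
by rewrite eq_sym ji mulr0.
Qed.

Lemma pdot_id3 : pdot id3 id3 = 3.
Proof.
rewrite pdotE /id3 (eq_bigr (fun _ => 1)) ?sumr_const ?card_ord //.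
move=> i _; rewrite (bigD1 i) //= eqxx mulr1 big1 ?addr0 // => j /negbTE ji.
by rewrite eq_sym ji mulr0.
Qed.

Lemma pdot_e00 : pdot e00 e00 = 1.
Proof.
rewrite /pdot /e00 (bigD1 (ord0, ord0)) //= ?eqxx mulr1 big1 ?addr0 //.
by move=> p /negbTE ->; rewrite mulr0.
Qed.

Lemma dot3_sqr_le (u v : 'rV[R]_3) : dot3 u v ^+ 2 <= dot3 u u * dot3 v v.
Proof. by rewrite /dot3 -!(eq_bigr _ (fun i _ => expr2 _)) sum_mul_sqr_le. Qed.

End PairVectors.

Section TensorSquares.
Variables (R : realType) (n : nat) (S : {set 'I_n}).
Local Notation point := {ffun 'I_n -> 'rV[R]_3}.
Local Notation index := {ffun 'I_n -> 'I_3 * 'I_3}.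

(* Coordinates outside [S] carry the unit vector [e00]: it contributes a factor
   1 to every inner product, so all tensors can be indexed by [(I_3 x I_3)^n]. *)
Definition square_factor (x : point) s := if s \in S then outer (x s) else e00 R.
Definition id_factor s := if s \in S then id3 R else e00 R.

Definition square_tensor (x : point) (f : index) := \prod_s square_factor x s (f s).
Definition id_tensor (f : index) := \prod_s id_factor s (f s).

Lemma prod_pdot_square_le_nonperp (x y : point) :
  on_spheres x -> on_spheres y ->
  \prod_s pdot (square_factor x s) (square_factor y s)
    <= (if [forall s in S, dot3 (x s) (y s) != 0] then 1 else 0).
Proof.
move=> hx hy.
have factorE s : pdot (square_factor x s) (square_factor y s)
                 = if s \in S then dot3 (x s) (y s) ^+ 2 else 1.
  by rewrite /square_factor; case: ifP => _; rewrite ?pdot_outer ?pdot_e00.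
have factor_ge0 s : 0 <= pdot (square_factor x s) (square_factor y s).
  by rewrite factorE; case: ifP => // _; exact: sqr_ge0.
have factor_le1 s : pdot (square_factor x s) (square_factor y s) <= 1.
  rewrite factorE; case: ifP => // _.
  by apply: le_trans (dot3_sqr_le _ _) _; rewrite hx hy mulr1.
case: ifP => [_|]; first by apply: prodr_ile1 => s _; rewrite factor_ge0 factor_le1.
move/negbT; rewrite negb_forall_in => /existsP [s /andP [sS]]; rewrite negbK => /eqP xy0.
by rewrite (bigD1 s) //= factorE sS xy0 expr0n mul0r.
Qed.

Lemma prod_pdot_square_id (x : point) :
  on_spheres x -> \prod_s pdot (square_factor x s) (id_factor s) = 1.
Proof.
move=> hx; apply: big1 => s _; rewrite /square_factor /id_factor.
by case: ifP => _; rewrite ?pdot_outer_id3 ?hx ?pdot_e00.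
Qed.

Lemma prod_pdot_id : \prod_s pdot (id_factor s) (id_factor s) = 3 ^+ #|S|.
Proof.
rewrite -prodr_const (big_mkcond (fun s => s \in S)) /=.
by apply: eq_bigr => s _; rewrite /id_factor; case: ifP => _; rewrite ?pdot_id3 ?pdot_e00.
Qed.

Lemma sum_mean_square_tensor_sqr (C : seq point) :
  \sum_f (\sum_(x <- C) square_tensor x f) ^+ 2
  = \sum_(x <- C) \sum_(y <- C) \prod_s pdot (square_factor x s) (square_factor y s).
Proof.
under [RHS]eq_bigr do under eq_bigr do rewrite prod_sum_mul_ffun.
under [RHS]eq_bigr do rewrite exchange_big /=.
rewrite exchange_big /=; apply: eq_bigr => f _.
by rewrite expr2 mulr_suml; apply: eq_bigr => x _; rewrite mulr_sumr.
Qed.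

Lemma sum_mean_square_tensor_id (C : seq point) :
  (forall x, x \in C -> on_spheres x) ->
  \sum_f (\sum_(x <- C) square_tensor x f) * id_tensor f = (size C)%:R.
Proof.
move=> hC; under eq_bigr do rewrite mulr_suml.
rewrite exchange_big /= -(sum1_size C) natr_sum !big_seq; apply: eq_bigr => x /hC hx.
by rewrite -prod_sum_mul_ffun prod_pdot_square_id.
Qed.

Lemma sum_id_tensor_sqr : \sum_f id_tensor f ^+ 2 = 3 ^+ #|S|.
Proof.
rewrite -prod_pdot_id prod_sum_mul_ffun.
by apply: eq_bigr => f _; rewrite expr2.
Qed.

End TensorSquares.

Theorem mainTheorem8 (R : realType) (n : nat)
  (C : seq {ffun 'I_n -> 'rV[R]_3})
  (HCuniq : uniq C) (HCne : C != [::])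
  (HCsph : forall x, x \in C -> on_spheres x)
  (S : {set 'I_n}) :
  ((3 : R) ^+ #|S|)^-1 <= prob_nonperp C S.
Proof.
have cauchy_schwarz :=
  sum_mul_sqr_le (fun f => \sum_(x <- C) square_tensor S x f) (id_tensor R S).
rewrite sum_mean_square_tensor_id // sum_mean_square_tensor_sqr
        sum_id_tensor_sqr in cauchy_schwarz.
have square_le_nonperp :
    \sum_(x <- C) \sum_(y <- C)
       \prod_s pdot (square_factor S x s) (square_factor S y s)
    <= \sum_(x <- C) \sum_(y <- C)
       (if [forall s in S, dot3 (x s) (y s) != 0] then 1 else 0).
  rewrite big_seq [leRHS]big_seq; apply: ler_sum => x /HCsph hx.
  rewrite big_seq [leRHS]big_seq; apply: ler_sum => y /HCsph hy.
  exact: prod_pdot_square_le_nonperp.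
have N_gt0 : (0 : R) < 3 ^+ #|S| by rewrite exprn_gt0.
rewrite /prob_nonperp natrX ler_pdivlMr ?exprn_gt0 ?ltr0n ?lt0n ?size_eq0 //.
rewrite mulrC ler_pdivrMr // (le_trans cauchy_schwarz) //.
by rewrite ler_wpM2r // ltW.
Qed.
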